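(* If $n\ge4$, then $r^D_\alpha$ is odd for every pseudo-composition $\alpha$ of $n$; that is, $c^D_{2,0}(n)=0$ and $c^D_{2,1}(n)=2^n$.
   Context: A signed permutation of $[n]$ is a bijection $w$ of $\{\pm1,\ldots,\pm n\}$ with $w(-i)=-w(i)$; it is even if an even number of $w(1),\ldots,w(n)$ are negative; these form $\mathfrak{S}^D_n$. With $w(0):=-w(2)$, $D(w)=\{i\in\{0,\ldots,n-1\}: w(i)>w(i+1)\}$. A pseudo-composition of $n$ ($\alpha\models_0 n$) is a sequence $(\alpha_1,\ldots,\alpha_\ell)$ of integers with $\alpha_1\ge0$, $\alpha_2,\ldots,\alpha_\ell>0$ and sum $n$, with $D(\alpha)=\{\alpha_1,\alpha_1+\alpha_2,\ldots,\alpha_1+\cdots+\alpha_{\ell-1}\}$. Then $r^D_\alpha=|\{w\in\mathfrak{S}^D_n: D(w)=D(\alpha)\}|$ and $c^D_{p,i}(n)=|\{\alpha\models_0 n: r^D_\alpha\equiv i\pmod p\}|$; there are $2^n$ pseudo-compositions of $n$. *)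

From mathcomp Require Import all_boot all_order all_algebra all_fingroup.
Set Implicit Arguments. Unset Strict Implicit. Unset Printing Implicit Defensive.
Import Order.TTheory GRing.Theory Num.Theory.

(* A signed permutation w of [n] is determined by its values w(1),...,w(n)
   (extended by w(-i) = -w(i)); we encode it as a pair (sigma, s) with sigma
   a permutation of 'I_n and s a sign vector:
      w(i+1) = (-1)^(s i) * (sigma i + 1)   for i : 'I_n.
   This is a bijection between sperm n and the signed permutations of [n]. *)
Definition sperm (n : nat) := ({perm 'I_n} * {ffun 'I_n -> bool})%type.

Definition wpos n (w : sperm n) (j : nat) : int :=
  match j with
  | 0 => 0
  | j'.+1 =>
    match @insub nat (fun k => (k < n)%N) _ j' with
    | Some i => (if w.2 i then -1 else 1) * ((w.1 i).+1)%:Z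
    | None => 0
    end
  end%R.

Definition wval n (w : sperm n) (j : nat) : int :=
  if j == 0%N then (- wpos w 2)%R else wpos w j.

Definition even_sperm n (w : sperm n) : bool :=
  ~~ odd #|[set i : 'I_n | w.2 i]|.

Definition Dsperm n (w : sperm n) : {set 'I_n} :=
  [set i : 'I_n | (wval w i.+1 < wval w i)%R].

Definition is_pcomp (n : nat) (a : seq nat) : bool :=
  [&& size a != 0%N, all (fun x => 0 < x)%N (behead a) & sumn a == n].

Definition Dpcomp (a : seq nat) : seq nat :=
  [seq sumn (take k a) | k <- iota 1 (size a).-1].

Definition rD (n : nat) (a : seq nat) : nat :=
  #|[set w : sperm n | even_sperm w &&
       (Dsperm w == [set i : 'I_n | (i : nat) \in Dpcomp a])]|.

(* Every pseudo-composition of n has length <= n+1 and entries <= n; this list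
   enumerates, without repetition, all sequences of length 1..n+1 with
   entries <= n. *)
Definition candidates (n : nat) : seq (seq nat) :=
  flatten [seq [seq map (@nat_of_ord n.+1) (val t) | t : l.-tuple 'I_n.+1]
          | l <- iota 1 n.+1].

Definition cD (p i n : nat) : nat :=
  count (fun a => is_pcomp n a && (rD n a == i %[mod p])) (candidates n).

(* Let r(S) be the number of even signed permutations w with D(w) = S, so that
   b(T) = sum_(S <= T) r(S) counts those with D(w) <= T.  By Moebius inversion
   mod 2, every r(S) is odd as soon as b(empty) = 1 and b(T) is even for T <> empty.
   The identity is the only even w without descents.  For T <> empty, an explicit
   fixed-point-free involution of { w even | D(w) <= T } keeps every descent outside
   T; it only has to respect comparisons of entries of distinct absolute values,
   and each of these is decided by the entry of larger absolute value:
   - if +-1 and +-2 are not w(1), w(2), exchange them and negate both;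
   - else, if t is the least element >= 2 of T, negate +-1 and the entry of least
     absolute value among w(t+1), ..., w(n);
   - else T <= {0, 1}: exchange w(1) and w(2), and negate both when 0 is in T.
   Each map changes an even number of signs.  This works for every n >= 2.
   Finally, a pseudo-composition of n is a first part x <= n followed by one of
   the compositions of n - x, of which there are 2^(n-x-1) (one if x = n); this
   gives 1 + 1 + 2 + ... + 2^(n-1) = 2^n pseudo-compositions. *)

From mathcomp Require Import all_boot all_order all_algebra all_fingroup zify.
Set Implicit Arguments. Unset Strict Implicit. Unset Printing Implicit Defensive.
Import Order.TTheory GRing.Theory Num.Theory.

Lemma card_fixfree_involution_even (T : finType) (f : T -> T) (A : {set T}) :
  involutive f -> (forall x, f x != x) -> {in A, forall x, f x \in A} ->
  ~~ odd #|A|.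
Proof.
move=> fK f_neq fA.
pose B := [set x | enum_rank x < enum_rank (f x)].
have rank_neq x : enum_rank x != enum_rank (f x).
  by rewrite (inj_eq enum_rank_inj) eq_sym f_neq.
rewrite -(cardsID B A); have -> : A :\: B = f @: (A :&: B).
  apply/setP => x; rewrite !inE; apply/andP/imsetP => [[xB xA]|[y]].
    exists (f x); rewrite ?fK // !inE fA // fK ltn_neqAle eq_sym rank_neq.
    by rewrite leqNgt.
  by rewrite !inE => /andP [yB yA] ->; rewrite fK -leqNgt ltnW ?fA.
by rewrite card_imset ?addnn ?odd_double //; apply: inv_inj.
Qed.

Lemma odd_sum_odd (I : finType) (P : pred I) (F : I -> nat) :
  (forall i, P i -> odd (F i)) -> odd (\sum_(i | P i) F i) = odd #|P|.
Proof.
move=> oddF; rewrite -sum1_card.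
by elim/big_rec2: _ => // i a b Pi e; rewrite !oddD oddF // e.
Qed.

Lemma odd_of_subset_sums (I : finType) (r : {set I} -> nat) :
  (forall T : {set I}, odd (\sum_(S : {set I} | S \subset T) r S) = (T == set0)) ->
  forall S, odd (r S).
Proof.
move=> sum_r S; elim: {S}_.+1 {-2}S (ltnSn #|S|) => // k IH S ltSk.
have := sum_r S; rewrite (bigD1 S) //= oddD odd_sum_odd; last first.
  move=> S' /andP [sub_S'S neq_S'S]; apply: IH.
  by apply: leq_trans (proper_card _) ltSk; rewrite properEneq neq_S'S.
have -> : #|[pred S' : {set I} | (S' \subset S) && (S' != S)]| = (2 ^ #|S|).-1.
  by rewrite -card_powerset (cardsD1 S) inE subxx /=; apply: eq_card => S'; rewrite !inE andbC.
case: (eqVneq S set0) => [->|S_neq0]; first by rewrite cards0 /= addbF.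
rewrite -subn1 oddB ?expn_gt0 // oddX orbF cards_eq0 (negbTE S_neq0).
by case: (odd (r S)).
Qed.

Lemma card_subset_fibres (X I : finType) (P : pred X) (D : X -> {set I}) (T : {set I}) :
  #|[set x | P x & D x \subset T]| = \sum_(S : {set I} | S \subset T) #|[set x | P x & D x == S]|.
Proof.
rewrite -sum1_card (partition_big D (fun S => S \subset T)) => [|x]; last first.
  by rewrite inE => /andP [].
apply: eq_bigr => S sub_ST; rewrite -sum1_card; apply: eq_bigl => x; rewrite !inE.
by case: eqP => [->|]; rewrite ?sub_ST ?andbT ?andbF.
Qed.

Lemma perm_ord_ge_eq1 n (s : {perm 'I_n}) : (forall i : 'I_n, i <= s i) -> s = 1%g.
Proof.
move=> ge_s; have /leqif_sum [_] := fun i (_ : predT i) => leqif_eq (ge_s i).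
rewrite [X in X == _](reindex_inj (@perm_inj _ s)) eqxx => /esym /forall_inP eq_s.
by apply/permP => i; apply/val_inj; rewrite perm1 [RHS](eqP (eq_s i _)).
Qed.

Lemma perm_incr_eq1 n (s : {perm 'I_n.+1}) :
  (forall j : 'I_n, s (widen_ord (leqnSn n) j) < s (lift ord0 j)) -> s = 1%g.
Proof.
move=> s_incr; apply: perm_ord_ge_eq1 => -[i]; elim: i => // i IH lt_i.
have := s_incr (Ordinal (lt_i : i < n)); have := IH (ltnW lt_i).
have -> : widen_ord (leqnSn n) (Ordinal (lt_i : i < n)) = Ordinal (ltnW lt_i) by apply: val_inj.
have -> : lift ord0 (Ordinal (lt_i : i < n)) = Ordinal lt_i by apply: val_inj.
by move=> /= ge_i /(leq_ltn_trans ge_i).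
Qed.

Lemma mul_tperm_neq (T : finType) (x y : T) (s : {perm T}) : x != y -> (tperm x y * s)%g != s.
Proof.
move=> neq_xy; apply/eqP => /(congr1 (fun t : {perm T} => t x)).
by rewrite permM tpermL => /perm_inj /eqP; rewrite eq_sym (negbTE neq_xy).
Qed.

Definition flip2 (I : finType) (s : {ffun I -> bool}) (a b : I) : {ffun I -> bool} :=
  [ffun i => s i (+) ((i == a) || (i == b))].

Section Flip2.
Variables (I : finType) (s : {ffun I -> bool}) (a b : I).

Lemma flip2C : flip2 s a b = flip2 s b a.
Proof. by apply/ffunP => i; rewrite !ffunE orbC. Qed.

Lemma flip2K : flip2 (flip2 s a b) a b = s.
Proof. by apply/ffunP => i; rewrite !ffunE -addbA addbb addbF. Qed.

Lemma odd_card_flip2 : a != b -> odd #|[set i | flip2 s a b i]| = odd #|[set i | s i]|.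
Proof.
have odd_cardE (P : pred I) : odd #|[set i | P i]| = \big[addb/false]_i P i.
  rewrite -sum1_card big_mkcond /= (big_morph odd oddD (erefl : odd 0 = false)).
  by apply: eq_bigr => i _; rewrite inE; case: (P i).
move=> neq_ab; rewrite !odd_cardE (eq_bigr _ (fun i _ => ffunE _ i)) big_split /=.
suff -> : \big[addb/false]_i ((i == a) || (i == b)) = false by rewrite addbF.
rewrite (bigD1 a) // (bigD1 b) 1?eq_sym //= big1 => [|i /andP [/negbTE-> /negbTE->]] //.
by rewrite !eqxx orbT.
Qed.

End Flip2.

Lemma card_set_perm (I : finType) (P : pred I) (t : {perm I}) :
  #|[set i | P (t i)]| = #|[set i | P i]|.
Proof.
rewrite -[RHS](card_preimset _ (@perm_inj _ t)); apply: eq_card => i.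
by rewrite !inE.
Qed.

(** * Counting pseudo-compositions *)

Fixpoint bounded_seqs (N l : nat) : seq (seq nat) :=
  if l is l'.+1 then [seq x :: s | x <- iota 0 N, s <- bounded_seqs N l'] else [:: [::]].

Lemma mem_bounded_seqs N l s :
  (s \in bounded_seqs N l) = (size s == l) && all (fun x => x < N) s.
Proof.
elim: l s => [|l IH] [|x s] //=; first by apply/allpairsP => -[[y t] []].
rewrite eqSS; apply/allpairsP/idP => [[[y t] /=]|/and3P [/eqP size_s lt_xN all_s]].
  rewrite mem_iota add0n IH => -[/andP [_ lt_yN] /andP [size_t all_t] [-> ->]].
  by rewrite lt_yN size_t all_t.
by exists (x, s); rewrite mem_iota add0n IH size_s eqxx lt_xN all_s.
Qed.

Lemma uniq_bounded_seqs N l : uniq (bounded_seqs N l).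
Proof.
elim: l => [//|l IH] /=; apply: allpairs_uniq => //; first exact: iota_uniq.
by move=> [x s] [y t] _ _ [-> ->].
Qed.

Lemma count_bounded_seqsS N l (P : pred (seq nat)) :
  count P (bounded_seqs N l.+1) = \sum_(0 <= x < N) count (fun s => P (x :: s)) (bounded_seqs N l).
Proof.
rewrite /= count_flatten sumnE !big_map /index_iota subn0.
by apply: eq_bigr => x _; rewrite count_map.
Qed.

Lemma perm_tuples_bounded_seqs N l :
  perm_eq [seq map (@nat_of_ord N.+1) (val t) | t : l.-tuple 'I_N.+1] (bounded_seqs N.+1 l).
Proof.
apply: uniq_perm; last move=> s; rewrite ?uniq_bounded_seqs //.
  by rewrite map_inj_uniq ?enum_uniq // => t u /(inj_map val_inj) /val_inj.
rewrite mem_bounded_seqs; apply/imageP/andP => [[t _ ->]|[/eqP size_s /allP lt_sN]].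
  by rewrite size_map size_tuple; split=> //; apply/allP => _ /mapP [x _ ->].
have size_s' : size (map (@inord N) s) == l by rewrite size_map size_s.
exists (Tuple size_s') => //=; rewrite -map_comp -[LHS]map_id; apply/eq_in_map => x /lt_sN.
by move=> /= lt_xN; rewrite inordK.
Qed.

Definition ncomps N l k : nat :=
  count (fun s => all (fun x => 0 < x) s && (sumn s == k)) (bounded_seqs N l).

Lemma ncomps0 N k : ncomps N 0 k = (k == 0).
Proof. by rewrite /ncomps /= eq_sym; case: (k == 0). Qed.

Lemma ncompsS N l k : k < N ->
  ncomps N l.+1 k = \sum_(1 <= x < k.+1) ncomps N l (k - x).
Proof.
move=> lt_kN; rewrite /ncomps count_bounded_seqsS (@big_cat_nat _ _ _ k.+1) //=.
rewrite [X in _ + X]big1_seq => [|x /andP [_]]; last first.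
  rewrite mem_index_iota => /andP [lt_kx _]; apply/eqP; rewrite -leqn0 leqNgt -has_count.
  by apply/hasP => -[s _ /andP [_ /eqP]]; lia.
rewrite addn0 big_ltn //= count_pred0 add0n; apply: eq_big_nat => x /andP [lt0x lt_xk].
by apply: eq_count => s /=; rewrite lt0x; congr (_ && _); apply/eqP/eqP; lia.
Qed.

Definition ncompositions k : nat := if k is k'.+1 then 2 ^ k' else 1.

Lemma sum_ncompositions k : \sum_(j < k.+1) ncompositions j = 2 ^ k.
Proof. by elim: k => [|k IH]; rewrite ?big_ord1 // big_ord_recr IH expnS /=; lia. Qed.

Lemma ncompositionsE k :
  ncompositions k = (k == 0) + \sum_(1 <= x < k.+1) ncompositions (k - x).
Proof.
case: k => [|k]; first by rewrite big_geq.
rewrite /= add0n big_add1 /= -(sum_ncompositions k) big_mkord.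
by rewrite (reindex_inj rev_ord_inj); apply: eq_bigr => j _; rewrite /= subSS.
Qed.

Lemma sum_ncomps N L k : k <= L -> k < N ->
  \sum_(l < L.+1) ncomps N l k = ncompositions k.
Proof.
elim: L k => [|L IH] k le_kL lt_kN.
  by move: le_kL; rewrite leqn0 big_ord1 ncomps0 => /eqP ->.
rewrite big_ord_recl ncomps0 ncompositionsE; congr (_ + _).
rewrite (eq_bigr (fun i : 'I_L.+1 => ncomps N i.+1 k)) => [|i _]; last by rewrite lift0.
under eq_bigr do rewrite ncompsS //.
rewrite exchange_big /=; apply: eq_big_nat => x /andP [lt0x lt_xk].
by apply: IH; lia.
Qed.

Lemma count_pcomp n : count (is_pcomp n) (candidates n) = 2 ^ n.
Proof.
rewrite /candidates count_flatten sumnE !big_map -(sum_ncompositions n).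
rewrite (eq_bigr (fun l => count (is_pcomp n) (bounded_seqs n.+1 l))); last first.
  by move=> l _; apply/seq.permP/perm_tuples_bounded_seqs.
rewrite -[iota 1 n.+1]/(index_iota 1 n.+2) big_add1 big_mkord.
under eq_bigr do rewrite count_bounded_seqsS.
rewrite exchange_big /= big_mkord (reindex_inj rev_ord_inj); apply: eq_bigr => x _.
rewrite -(sum_ncomps (N := n.+1) (L := n)) ?leq_ord ?ltn_ord //; apply: eq_bigr => l _.
apply: eq_count => s; rewrite /is_pcomp /= subSS; congr (_ && _).
by apply/eqP/eqP; have := ltn_ord x; lia.
Qed.

(** * Descent classes of even signed permutations *)

Local Open Scope ring_scope.

Lemma lt_normr_ltr (R : realDomainType) (x y : R) : `|x| < `|y| -> (x < y) = (0 < y).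
Proof.
rewrite ltr_norml => /andP [lt_Nyx lt_xy].
case: (ltrgt0P y) => [y_gt0|y_lt0|y0].
- by rewrite gtr0_norm in lt_xy.
- by rewrite ltr0_norm // opprK in lt_Nyx; apply/negbTE; rewrite -leNgt ltW.
- by move: (lt_trans lt_Nyx lt_xy); rewrite y0 normr0 oppr0 ltxx.
Qed.

Lemma lt_normr_gtr (R : realDomainType) (x y : R) : `|x| < `|y| -> (y < x) = (y < 0).
Proof. by rewrite -normrN -(normrN y) => /lt_normr_ltr; rewrite ltrN2 oppr_gt0. Qed.

Lemma ltrNl_normr (R : realDomainType) (x y : R) : `|x| < `|y| -> (- x < y) = (x < y).
Proof. by move=> lt_xy; rewrite (lt_normr_ltr lt_xy) lt_normr_ltr ?normrN. Qed.

Lemma ltrNr_normr (R : realDomainType) (x y : R) : `|x| < `|y| -> (y < - x) = (y < x).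
Proof. by move=> lt_xy; rewrite (lt_normr_gtr lt_xy) lt_normr_gtr ?normrN. Qed.

Definition signed (b : bool) (k : nat) : int := (if b then -1 else 1) * k.+1%:Z.

Lemma signedN b k : - signed b k = signed (~~ b) k.
Proof. by case: b; rewrite /signed ?mulN1r ?mul1r ?opprK. Qed.

Lemma normr_signed b k : `|signed b k| = k.+1%:Z.
Proof. by case: b; rewrite /signed ?mulN1r ?mul1r ?normrN. Qed.

Section EvenSignedPermutations.
Variable m : nat.
Local Notation n := m.+2.
Implicit Types (w : sperm n) (S T : {set 'I_n}) (x y z t : 'I_n).

Definition o1 : 'I_n := Ordinal (isT : (1 < n)%N).

(* [entry w x] is w(x+1) and [w.1 x] is |w(x+1)| - 1: positions and absolute
   values are 0-based, whereas the descent i of D(w) compares w(i) with w(i+1). *)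
Definition entry w x : int := signed (w.2 x) (w.1 x).

Lemma normr_entry w x : `|entry w x| = (w.1 x).+1%:Z.
Proof. exact: normr_signed. Qed.

Lemma wposS w x : wpos w x.+1 = entry w x.
Proof. by rewrite /wpos; case: insubP => [y _ /val_inj -> //|]; rewrite ltn_ord. Qed.

Lemma mem_Dsperm0 w : (ord0 \in Dsperm w) = (entry w ord0 < - entry w o1).
Proof. by rewrite inE /wval -(wposS w ord0) -(wposS w o1). Qed.

Lemma mem_DspermS w x y : x = y.+1 :> nat -> (x \in Dsperm w) = (entry w x < entry w y).
Proof. by move=> eq_x; rewrite inE /wval -!wposS eq_x. Qed.

Lemma eq_mem_Dsperm w w' x :
    (x = ord0 -> (entry w' ord0 < - entry w' o1) = (entry w ord0 < - entry w o1)) ->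
    (forall y, x = y.+1 :> nat -> (entry w' x < entry w' y) = (entry w x < entry w y)) ->
  (x \in Dsperm w') = (x \in Dsperm w).
Proof.
case: x => [[|k] lt_kn] eq0 eqS.
  by rewrite (_ : Ordinal _ = ord0) ?mem_Dsperm0 ?eq0 //; apply: val_inj.
by rewrite !(@mem_DspermS _ _ (Ordinal (ltnW lt_kn))) ?eqS.
Qed.

Definition swap_entries x y w : sperm n := ((tperm x y * w.1)%g, [ffun z => w.2 (tperm x y z)]).
Definition negate2 x y w : sperm n := (w.1, flip2 w.2 x y).
Definition swap_negate x y w : sperm n := negate2 x y (swap_entries x y w).

Lemma entry_swap_entries x y w z : entry (swap_entries x y w) z = entry w (tperm x y z).
Proof. by rewrite /entry /= permM ffunE. Qed.

Lemma entry_negate2 x y w z :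
  entry (negate2 x y w) z = if (z == x) || (z == y) then - entry w z else entry w z.
Proof. by rewrite /entry /= ffunE; case: ifP; rewrite ?addbT ?addbF ?signedN. Qed.

Lemma swap_entriesK x y : involutive (swap_entries x y).
Proof.
move=> [s e]; rewrite /swap_entries /= mulgA tperm2 mul1g; congr (_, _).
by apply/ffunP => z; rewrite !ffunE tpermK.
Qed.

Lemma negate2K x y : involutive (negate2 x y).
Proof. by move=> [s e]; rewrite /negate2 /= flip2K. Qed.

Lemma swap_negateK x y : involutive (swap_negate x y).
Proof.
move=> w; rewrite /swap_negate.
have -> : swap_entries x y (negate2 x y (swap_entries x y w)) = negate2 x y w.
  rewrite /swap_entries /negate2 /= mulgA tperm2 mul1g; congr (_, _).
  apply/ffunP => z; rewrite !ffunE tpermK; congr (_ (+) _).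
  by case: tpermP => [->|->|]; rewrite ?eqxx ?orbT.
exact: negate2K.
Qed.

Lemma swap_negateC x y : swap_negate x y =1 swap_negate y x.
Proof. by move=> w; rewrite /swap_negate /negate2 /swap_entries tpermC flip2C. Qed.

Lemma mag_swap_entries x y w z : (swap_entries x y w).1 z = w.1 (tperm x y z).
Proof. exact: permM. Qed.

Lemma swap_entries_neq x y w : x != y -> swap_entries x y w != w.
Proof. by move=> /(mul_tperm_neq w.1); apply: contra_neq => /(congr1 fst). Qed.

Lemma swap_negate_neq x y w : x != y -> swap_negate x y w != w.
Proof. by move=> /(mul_tperm_neq w.1); apply: contra_neq => /(congr1 fst). Qed.

Lemma negate2_neq x y w : negate2 x y w != w.
Proof.
apply/eqP => /(congr1 (fun v : sperm n => v.2 x)).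
by rewrite /= ffunE eqxx addbT; case: (w.2 x).
Qed.

Lemma even_swap_entries x y w : even_sperm (swap_entries x y w) = even_sperm w.
Proof.
rewrite /even_sperm /= (eq_card (B := [set z | w.2 (tperm x y z)])) ?card_set_perm //.
by move=> z; rewrite !inE ffunE.
Qed.

Lemma even_negate2 x y w : x != y -> even_sperm (negate2 x y w) = even_sperm w.
Proof. by move=> neq_xy; rewrite /even_sperm odd_card_flip2. Qed.

Lemma even_swap_negate x y w : x != y -> even_sperm (swap_negate x y w) = even_sperm w.
Proof. by move=> neq_xy; rewrite even_negate2 // even_swap_entries. Qed.

Lemma lt_normr_entry w w' c d :
  (w'.1 c < 2)%N -> (2 <= w.1 d)%N -> `|entry w' c| < `|entry w d|.
Proof. by rewrite !normr_entry; lia. Qed.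

Section SwapSmallest.
Variables (w : sperm n) (x y : 'I_n).
Hypotheses (neq_xy : x != y) (small_x : (w.1 x < 2)%N) (small_y : (w.1 y < 2)%N).
Local Notation w' := (swap_negate x y w).

Lemma small_pair z : (w.1 z < 2)%N -> (z == x) || (z == y).
Proof.
move=> small_z; have : w.1 x != w.1 y by rewrite (inj_eq perm_inj).
rewrite -[z == x](inj_eq (@perm_inj _ w.1)) -[z == y](inj_eq (@perm_inj _ w.1)).
by rewrite -!val_eqE /=; move: small_x small_y small_z; lia.
Qed.

Lemma small_swap_negate z : (w'.1 z < 2)%N = (w.1 z < 2)%N.
Proof.
rewrite /= permM; apply/idP/idP => [|/small_pair]; last first.
  by case/orP => /eqP->; rewrite ?tpermL ?tpermR.
by case: tpermP => [->|->|//] _; rewrite ?small_x ?small_y.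
Qed.

Lemma entry_swap_negate_big z : (2 <= w.1 z)%N -> entry w' z = entry w z.
Proof.
move=> big_z; have [neq_zx neq_zy] : z != x /\ z != y.
  by split; apply: contraTneq big_z => ->; rewrite -ltnNge.
rewrite entry_negate2 (negbTE neq_zx) (negbTE neq_zy) entry_swap_entries.
by rewrite tpermD // eq_sym.
Qed.

Lemma lt_entry_swap_negate c d : c != d ->
  (entry w' c < entry w' d) = (entry w c < entry w d).
Proof.
move=> neq_cd; case: (ltnP (w.1 c) 2) => [small_c|big_c]; last first.
  rewrite (entry_swap_negate_big big_c); case: (ltnP (w.1 d) 2) => [small_d|big_d].
    have small_d' : (w'.1 d < 2)%N by rewrite small_swap_negate.
    rewrite (lt_normr_gtr (lt_normr_entry small_d' big_c)).
    by rewrite (lt_normr_gtr (lt_normr_entry small_d big_c)).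
  by rewrite (entry_swap_negate_big big_d).
case: (ltnP (w.1 d) 2) => [small_d|big_d]; last first.
  have small_c' : (w'.1 c < 2)%N by rewrite small_swap_negate.
  rewrite (entry_swap_negate_big big_d).
  rewrite (lt_normr_ltr (lt_normr_entry small_c' big_d)).
  by rewrite (lt_normr_ltr (lt_normr_entry small_c big_d)).
have entry_w'_x : entry w' x = - entry w y.
  by rewrite entry_negate2 eqxx entry_swap_entries tpermL.
have entry_w'_y : entry w' y = - entry w x.
  by rewrite entry_negate2 eqxx orbT entry_swap_entries tpermR.
move: (small_pair small_c) (small_pair small_d) neq_cd.
by do 2!case/orP=> /eqP->; rewrite ?eqxx // => _; rewrite entry_w'_x entry_w'_y ltrN2.
Qed.

Lemma lt_opp_entry_swap_negate c d : ~~ ((w.1 c < 2) && (w.1 d < 2))%N ->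
  (entry w' c < - entry w' d) = (entry w c < - entry w d).
Proof.
case: (ltnP (w.1 c) 2) => [small_c|big_c] /=; last first.
  rewrite (entry_swap_negate_big big_c); case: (ltnP (w.1 d) 2) => [small_d|big_d] _.
    have lt_w'd_c : `|- entry w' d| < `|entry w c|.
      by rewrite normrN lt_normr_entry ?small_swap_negate.
    have lt_wd_c : `|- entry w d| < `|entry w c| by rewrite normrN lt_normr_entry.
    by rewrite (lt_normr_gtr lt_w'd_c) (lt_normr_gtr lt_wd_c).
  by rewrite (entry_swap_negate_big big_d).
rewrite -leqNgt => big_d; rewrite (entry_swap_negate_big big_d).
have lt_w'c_d : `|entry w' c| < `|- entry w d|.
  by rewrite normrN lt_normr_entry ?small_swap_negate.
have lt_wc_d : `|entry w c| < `|- entry w d| by rewrite normrN lt_normr_entry.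
by rewrite (lt_normr_ltr lt_w'c_d) (lt_normr_ltr lt_wc_d).
Qed.

End SwapSmallest.

Definition pos1 w : 'I_n := (w.1)^-1%g ord0.
Definition pos2 w : 'I_n := (w.1)^-1%g o1.

Lemma mag_pos1 w : w.1 (pos1 w) = ord0. Proof. exact: permKV. Qed.
Lemma mag_pos2 w : w.1 (pos2 w) = o1. Proof. exact: permKV. Qed.

Lemma pos1_neq_pos2 w : pos1 w != pos2 w.
Proof. by rewrite (can_eq (permKV _)). Qed.

Definition small_head w : bool := (w.1 ord0 < 2)%N && (w.1 o1 < 2)%N.

Lemma small_head_pos1 w : small_head w -> pos1 w = ord0 \/ pos1 w = o1.
Proof.
case/andP=> small0 small1; have small_pos1 : (w.1 (pos1 w) < 2)%N by rewrite mag_pos1.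
by case/orP: (@small_pair w ord0 o1 isT small0 small1 _ small_pos1) => /eqP; [left|right].
Qed.

Lemma small_head_big w x : small_head w -> (2 <= x)%N -> (2 <= w.1 x)%N.
Proof.
case/andP=> small0 small1 big_x; rewrite leqNgt; apply: contraTN big_x.
by move=> /(@small_pair w ord0 o1 isT small0 small1); rewrite -ltnNge; case/orP=> /eqP->.
Qed.

Lemma small_head_swap_negate w x y : x != y -> (w.1 x < 2)%N -> (w.1 y < 2)%N ->
  small_head (swap_negate x y w) = small_head w.
Proof. by move=> neq_xy small_x small_y; rewrite /small_head !small_swap_negate. Qed.

Lemma ord_succ_neq x y : x = y.+1 :> nat -> x != y.
Proof. by move=> eq_x; rewrite -val_eqE /= eq_x; lia. Qed.

Definition swap_small w : sperm n := swap_negate (pos1 w) (pos2 w) w.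

Lemma swap_smallK : involutive swap_small.
Proof.
move=> w; have [pos1' pos2'] : pos1 (swap_small w) = pos2 w /\ pos2 (swap_small w) = pos1 w.
  by split; apply: (@perm_inj _ (swap_small w).1);
    rewrite permKV mag_swap_entries ?tpermL ?tpermR ?mag_pos1 ?mag_pos2.
by rewrite {1}/swap_small pos1' pos2' swap_negateC swap_negateK.
Qed.

Lemma small_mag_pos1 w : (w.1 (pos1 w) < 2)%N. Proof. by rewrite mag_pos1. Qed.
Lemma small_mag_pos2 w : (w.1 (pos2 w) < 2)%N. Proof. by rewrite mag_pos2. Qed.

Lemma Dsperm_swap_small w z : ~~ small_head w ->
  (z \in Dsperm (swap_small w)) = (z \in Dsperm w).
Proof.
move=> not_small; apply: eq_mem_Dsperm => [_|y /ord_succ_neq neq_zy].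
  by apply: lt_opp_entry_swap_negate; rewrite ?pos1_neq_pos2 ?small_mag_pos1 ?small_mag_pos2.
by apply: lt_entry_swap_negate; rewrite ?pos1_neq_pos2 ?small_mag_pos1 ?small_mag_pos2.
Qed.

(* The positions of w(t+1), ..., w(n), where t is the least element >= 2 of T. *)
Definition upper T : {set 'I_n} := [set z : 'I_n | [exists t in T, (2 <= t <= z)%N]].

Lemma upper_ge2 T z : z \in upper T -> (2 <= z)%N.
Proof. by rewrite inE => /exists_inP [t _ /andP [le2t /(leq_trans le2t)]]. Qed.

Lemma upper_succ T y z : y \in upper T -> z = y.+1 :> nat -> z \in upper T.
Proof.
rewrite !inE => /exists_inP [t tT /andP [le2t le_ty]] eq_z.
by apply/exists_inP; exists t; rewrite // le2t eq_z (leq_trans le_ty).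
Qed.

Lemma upper_pred T y z : z \in upper T -> z \notin T -> z = y.+1 :> nat -> y \in upper T.
Proof.
rewrite !inE => /exists_inP [t tT /andP [le2t le_tz]] zT eq_z.
apply/exists_inP; exists t; rewrite // le2t -ltnS -eq_z ltn_neqAle le_tz andbT.
by apply: contraNneq zT => /val_inj <-.
Qed.

Lemma notin_upper_max T t : ord_max \notin upper T -> t \in T -> (t < 2)%N.
Proof.
move=> maxT tT; rewrite ltnNge; apply: contra maxT => le2t.
by rewrite inE; apply/exists_inP; exists t; rewrite // le2t -ltnS ltn_ord.
Qed.

Lemma lt_normr_entry_pos1 w x : x != pos1 w -> `|entry w (pos1 w)| < `|entry w x|.
Proof. by rewrite !normr_entry -(inj_eq (@perm_inj _ w.1)) mag_pos1 -val_eqE /=; lia. Qed.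

Definition min_upper T w : 'I_n := [arg min_(z < ord_max in upper T) w.1 z].
Definition flip_upper T w : sperm n := negate2 (pos1 w) (min_upper T w) w.

Section FlipUpper.
Variables (T : {set 'I_n}) (w : sperm n).
Hypotheses (small_w : small_head w) (max_upper : ord_max \in upper T).
Local Notation a := (pos1 w).
Local Notation r := (min_upper T w).

Lemma min_upperP : r \in upper T /\ {in upper T, forall z, (w.1 r <= w.1 z)%N}.
Proof. by rewrite /min_upper; case: arg_minnP. Qed.

Lemma min_upper_ge2 : (2 <= r)%N.
Proof. exact: upper_ge2 (proj1 min_upperP). Qed.

Lemma pos1_lt2 : (a < 2)%N.
Proof. by case: (small_head_pos1 small_w) => ->. Qed.

Lemma pos1_neq_min_upper : a != r.
Proof. by have := min_upper_ge2; have := pos1_lt2; rewrite -val_eqE /=; lia. Qed.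

Lemma lt_normr_entry_min_upper x : x \in upper T -> x != r -> `|entry w r| < `|entry w x|.
Proof.
move=> x_upper neq_xr; have := proj2 min_upperP x x_upper.
by rewrite !normr_entry -(inj_eq (@perm_inj _ w.1)) -val_eqE /= in neq_xr *; lia.
Qed.

Local Notation w' := (flip_upper T w).

Lemma flip_upper_desc0 :
  (entry w' ord0 < - entry w' o1) = (entry w ord0 < - entry w o1).
Proof.
have neq_r x : (x < 2)%N -> (x == r) = false.
  by have := min_upper_ge2; move=> ge2_r lt_x2; apply/negbTE; rewrite -val_eqE /=; lia.
rewrite !entry_negate2 !neq_r ?orbF //; case: (small_head_pos1 small_w) => a0.
  by rewrite a0 eqxx /=; apply: ltrNl_normr; rewrite normrN -a0 lt_normr_entry_pos1 ?a0.
by rewrite a0 eqxx /= opprK; symmetry; apply: ltrNr_normr; rewrite -a0 lt_normr_entry_pos1 ?a0.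
Qed.

Lemma flip_upper_lt_pred z y : z \notin T -> z = y.+1 :> nat ->
  (entry w' z < entry w' y) = (entry w z < entry w y).
Proof.
move=> zT eq_z; have [r_upper _] := min_upperP; rewrite !entry_negate2.
have [z_a|z_na] := eqVneq z a.
  have y_na : y != a by rewrite -z_a eq_sym ord_succ_neq.
  have y_nr : y != r.
    by have := min_upper_ge2; have := pos1_lt2; rewrite -z_a -val_eqE /= eq_z; lia.
  by rewrite (negbTE y_na) (negbTE y_nr) z_a; apply: ltrNl_normr; apply: lt_normr_entry_pos1.
have [y_a|y_na] := eqVneq y a.
  have z_nr : z != r.
    apply: contraTneq pos1_lt2 => z_r; rewrite -y_a -leqNgt (@upper_ge2 T) //.
    by apply: (upper_pred _ zT eq_z); rewrite z_r.
  by rewrite (negbTE z_nr) y_a; apply: ltrNr_normr; apply: lt_normr_entry_pos1.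
have [z_r|z_nr] := eqVneq z r.
  have y_upper : y \in upper T by apply: (upper_pred _ zT eq_z); rewrite z_r.
  have y_nr : y != r by rewrite -z_r eq_sym ord_succ_neq.
  rewrite (negbTE y_nr) z_r; apply: ltrNl_normr.
  exact: lt_normr_entry_min_upper.
have [y_r|//] := eqVneq y r.
have z_upper : z \in upper T by apply: (upper_succ _ eq_z); rewrite y_r.
by rewrite y_r; apply: ltrNr_normr; apply: lt_normr_entry_min_upper.
Qed.

Lemma Dsperm_flip_upper z : z \notin T ->
  (z \in Dsperm (flip_upper T w)) = (z \in Dsperm w).
Proof.
move=> zT; apply: eq_mem_Dsperm => [_|y]; first exact: flip_upper_desc0.
exact: flip_upper_lt_pred.
Qed.

End FlipUpper.

Lemma Dsperm_swap_head_negate w z : small_head w -> z != ord0 ->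
  (z \in Dsperm (swap_negate ord0 o1 w)) = (z \in Dsperm w).
Proof.
case/andP=> small0 small1 nz0; apply: eq_mem_Dsperm => [z0|y /ord_succ_neq neq_zy].
  by rewrite z0 eqxx in nz0.
exact: lt_entry_swap_negate.
Qed.

Lemma Dsperm_swap_head w z : small_head w -> z != o1 ->
  (z \in Dsperm (swap_entries ord0 o1 w)) = (z \in Dsperm w).
Proof.
move=> small_w nz1; apply: eq_mem_Dsperm => [_|y eq_z]; rewrite !entry_swap_entries.
  by rewrite tpermL tpermR ltrNr.
have tpermD01 x : (2 <= x)%N -> tperm ord0 o1 x = x.
  by move=> le2x; rewrite tpermD // -val_eqE /=; lia.
have z_ge2 : (2 <= z)%N by move: nz1; rewrite -val_eqE /= eq_z; lia.
rewrite tpermD01 //; have [y1|ny1] := eqVneq y o1; last first.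
  by rewrite tpermD01 //; move: ny1 eq_z z_ge2; rewrite -val_eqE /=; lia.
case/andP: small_w (small_head_big small_w z_ge2) => small0 small1 big_z.
rewrite y1 tpermR (lt_normr_gtr (lt_normr_entry small0 big_z)).
by rewrite (lt_normr_gtr (lt_normr_entry small1 big_z)).
Qed.

Definition descent_involution T w : sperm n :=
  if ~~ small_head w then swap_small w
  else if ord_max \in upper T then flip_upper T w
  else if ord0 \in T then swap_negate ord0 o1 w
  else swap_entries ord0 o1 w.

Lemma small_head_descent_involution T w :
  small_head (descent_involution T w) = small_head w.
Proof.
rewrite /descent_involution; case: (boolP (small_head w)) => [small_w|not_small] /=.
  case/andP: (small_w) => small0 small1.
  case: (_ \in upper T) => //; case: (_ \in T); first by rewrite small_head_swap_negate.
  by rewrite /small_head !mag_swap_entries tpermL tpermR andbC.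
rewrite small_head_swap_negate ?pos1_neq_pos2 ?small_mag_pos1 ?small_mag_pos2 //.
exact: negbTE.
Qed.

Lemma descent_involutionK T : involutive (descent_involution T).
Proof.
move=> w; rewrite {1}/descent_involution small_head_descent_involution.
rewrite /descent_involution; case: (small_head w) => /=; last exact: swap_smallK.
case: (_ \in upper T); first exact: negate2K.
by case: (_ \in T); [exact: swap_negateK | exact: swap_entriesK].
Qed.

Lemma descent_involution_neq T w : descent_involution T w != w.
Proof.
rewrite /descent_involution; case: (small_head w) => /=.
  case: (_ \in upper T); first exact: negate2_neq.
  by case: (_ \in T); [exact: swap_negate_neq | exact: swap_entries_neq].
exact/swap_negate_neq/pos1_neq_pos2.
Qed.

Lemma even_descent_involution T w :
  even_sperm (descent_involution T w) = even_sperm w.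
Proof.
rewrite /descent_involution; case: (boolP (small_head w)) => [small_w|_] /=.
  case: (boolP (_ \in upper T)) => [max_upper|_].
    exact/even_negate2/pos1_neq_min_upper.
  by case: (_ \in T); [exact: even_swap_negate | exact: even_swap_entries].
exact/even_swap_negate/pos1_neq_pos2.
Qed.

Lemma Dsperm_descent_involution T w z : T != set0 -> z \notin T ->
  (z \in Dsperm (descent_involution T w)) = (z \in Dsperm w).
Proof.
move=> T_neq0 zT; rewrite /descent_involution.
case: (boolP (small_head w)) => [small_w|not_small] /=; last exact: Dsperm_swap_small.
case: (boolP (_ \in upper T)) => [max_upper|not_max]; first exact: Dsperm_flip_upper.
case: (boolP (ord0 \in T)) => [T0|nT0].
  by apply: Dsperm_swap_head_negate => //; apply: contraNneq zT => ->.
apply: Dsperm_swap_head => //; apply: contraNneq zT => ->.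
have [t tT] := set0Pn _ T_neq0; have := notin_upper_max not_max tT.
have : t != ord0 by apply: contraNneq nT0 => <-.
by rewrite -val_eqE /= => nt0 lt_t2; rewrite (_ : o1 = t) //; apply: val_inj => /=; lia.
Qed.

Lemma even_card_Dsperm_subset T : T != set0 ->
  ~~ odd #|[set w : sperm n | even_sperm w & Dsperm w \subset T]|.
Proof.
move=> T_neq0.
apply: (card_fixfree_involution_even (descent_involutionK T) (descent_involution_neq T)).
move=> w; rewrite !inE even_descent_involution => /andP [-> /subsetP DT] /=.
apply/subsetP => z; apply: contraTT => zT.
by rewrite Dsperm_descent_involution //; apply: contra zT; apply: DT.
Qed.

Definition id_sperm : sperm n := (1%g, [ffun=> false]).

Lemma entry_gt0 w x : (0 < entry w x) = ~~ w.2 x.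
Proof. by rewrite /entry /signed; case: (w.2 x); lia. Qed.

Lemma even_id_sperm : even_sperm id_sperm.
Proof.
by rewrite /even_sperm (_ : [set _ | _] = set0) ?cards0 //; apply/setP => x; rewrite !inE ffunE.
Qed.

Lemma Dsperm_id_sperm : Dsperm id_sperm = set0.
Proof.
have entry_id x : entry id_sperm x = x.+1%:Z by rewrite /entry ffunE perm1 /signed mul1r.
apply/setP => -[[|k] lt_k]; rewrite in_set0.
  rewrite (_ : Ordinal lt_k = ord0); last exact: val_inj.
  by rewrite mem_Dsperm0 !entry_id.
by rewrite (@mem_DspermS _ _ (Ordinal (ltnW lt_k))) // !entry_id /=; lia.
Qed.

Lemma Dsperm_eq0_entry_gt0 w z : Dsperm w = set0 -> z != ord0 -> 0 < entry w z.
Proof.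
move=> D0; have no_desc x : x \notin Dsperm w by rewrite D0 inE.
case: z => -[//|k]; elim: k => [|k IH] lt_k _.
  have := no_desc ord0; have := no_desc o1; have := normr_entry w o1.
  rewrite mem_Dsperm0 (@mem_DspermS _ _ ord0) // -!leNgt (_ : Ordinal lt_k = o1) //.
    by lia.
  exact: val_inj.
have := no_desc (Ordinal lt_k); have := IH (ltnW lt_k) isT.
by rewrite (@mem_DspermS _ _ (Ordinal (ltnW lt_k))) // -leNgt; apply: lt_le_trans.
Qed.

Lemma Dsperm_eq0_signs w : even_sperm w -> Dsperm w = set0 -> w.2 = [ffun=> false].
Proof.
move=> even_w D0.
have sign_pos z : z != ord0 -> w.2 z = false.
  by move=> /(Dsperm_eq0_entry_gt0 D0); rewrite entry_gt0 => /negbTE.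
apply/ffunP => z; rewrite ffunE; have [->|/sign_pos //] := eqVneq z ord0.
apply/negP => sign0; move: even_w; rewrite /even_sperm (_ : [set _ | _] = [set ord0]) ?cards1 //.
apply/setP => x; rewrite !inE; apply/idP/eqP => [|->//].
by apply: contraTeq => /sign_pos ->.
Qed.

Lemma Dsperm_eq0 w : even_sperm w -> Dsperm w = set0 -> w = id_sperm.
Proof.
move=> even_w D0; have signs := Dsperm_eq0_signs even_w D0.
have entry_mag z : entry w z = (w.1 z).+1%:Z by rewrite /entry signs ffunE /signed mul1r.
have mag_incr (j : 'I_m.+1) : (w.1 (widen_ord (leqnSn _) j) < w.1 (lift ord0 j))%N.
  have : lift ord0 j \notin Dsperm w by rewrite D0 inE.
  rewrite (@mem_DspermS _ _ (widen_ord (leqnSn _) j)) ?lift0 // -leNgt !entry_mag lez_nat.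
  rewrite ltnS leq_eqVlt => /orP [/eqP /val_inj /perm_inj /(congr1 (@nat_of_ord _))|//].
  by rewrite lift0 /=; lia.
by rewrite [w]surjective_pairing (perm_incr_eq1 mag_incr) signs.
Qed.

Lemma card_Dsperm_eq0 : #|[set w : sperm n | even_sperm w & Dsperm w == set0]| = 1%N.
Proof.
apply/eqP/cards1P; exists id_sperm; apply/setP => w; rewrite !inE.
apply/andP/eqP => [[even_w /eqP D0]|->]; first exact: Dsperm_eq0.
by rewrite even_id_sperm Dsperm_id_sperm.
Qed.

Lemma odd_card_Dsperm_eq S : odd #|[set w : sperm n | even_sperm w & Dsperm w == S]|.
Proof.
pose r S := #|[set w : sperm n | even_sperm w & Dsperm w == S]|.
apply: (odd_of_subset_sums (r := r)) => T.
rewrite -card_subset_fibres; have [->|T_neq0] := eqVneq T set0.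
  suff -> : [set w : sperm n | even_sperm w & Dsperm w \subset set0] =
            [set w : sperm n | even_sperm w & Dsperm w == set0] by rewrite card_Dsperm_eq0.
  by apply/setP => w; rewrite !inE subset0.
exact/negbTE/even_card_Dsperm_subset.
Qed.

End EvenSignedPermutations.

Theorem corollary5p2 (n : nat) (hn : (4 <= n)%N) :
  (forall a : seq nat, is_pcomp n a -> odd (rD n a)) /\
  cD 2 0 n = 0%N /\ cD 2 1 n = (2 ^ n)%N.
Proof.
have odd_rD a : odd (rD n a) by case: n hn => [|[|m]] // _; apply: odd_card_Dsperm_eq.
split=> [a _|]; first exact: odd_rD.
split; last by rewrite -count_pcomp; apply: eq_count => a; rewrite modn2 odd_rD andbT.
by rewrite /cD (eq_count (a2 := pred0)) ?count_pred0 // => a; rewrite /= modn2 odd_rD andbF.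
Qed.
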